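(* For all $1\le i\le n$ and $1\le r\le n$, $$|\mathcal{I}^{(r)}_{x_i}(P_n^* )|\le |\mathcal{I}^{(r)}_{p_i}(P_n^* )|.$$
   Context: $\mathcal{I}^{(r)}_v(G)$ denotes the family of independent $r$-sets (sets of $r$ pairwise non-adjacent vertices) of a graph $G$ containing the vertex $v$. For a graph $G$ with vertices $x_1,\dots,x_n$, the pendant graph $G^*$ has vertex set $\{x_1,\dots,x_n\}\sqcup\{p_1,\dots,p_n\}$ and edge set $E(G)\sqcup\{x_1p_1,\dots,x_np_n\}$. $P_n$ is the path with vertices $x_1,\dots,x_n$ and edges $x_jx_{j+1}$, $1\le j\le n-1$, and $P_n^*$ its pendant graph. *)

From mathcomp Require Import all_boot.
Set Implicit Arguments. Unset Strict Implicit. Unset Printing Implicit Defensive.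

(* A simple graph on a finite vertex type T is given by its adjacency relation
   (assumed symmetric and irreflexive where relevant). *)

Definition independent (T : finType) (adj : rel T) (S : {set T}) : bool :=
  [forall x in S, forall y in S, ~~ adj x y].

Definition indep_rsets_at (T : finType) (adj : rel T) (r : nat) (v : T)
  : {set {set T}} :=
  [set S : {set T} | [&& independent adj S, #|S| == r & v \in S]].

(* Vertices of P_n^*: inl i = x_{i+1}, inr i = p_{i+1} (0-indexed ordinals). *)
Definition pvert (n : nat) := ('I_n + 'I_n)%type.

Definition path_adj (n : nat) (i j : 'I_n) : bool :=
  (i.+1 == j :> nat) || (j.+1 == i :> nat).

Definition pendant_adj (n : nat) (adjG : rel 'I_n) : rel (pvert n) :=
  fun u v =>
    match u, v with
    | inl i, inl j => adjG i j
    | inl i, inr j => i == j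
    | inr i, inl j => i == j
    | inr _, inr _ => false
    end.

Definition path_pendant_adj (n : nat) : rel (pvert n) :=
  pendant_adj (@path_adj n).

From mathcomp Require Import all_boot.

(* In the pendant graph P_n^* the vertex p_i is a leaf hanging
   off x_i.  Replacing x_i by p_i in an independent r-set containing x_i
   gives an independent r-set containing p_i: p_i is not in the set (it is
   adjacent to x_i) and its only neighbour x_i has been removed.  This swap
   is injective, whence the inequality.

   The bound holds for every r. *)

Section DominatedSwap.

Variables (T : finType) (adj : rel T).
Hypotheses (adj_sym : symmetric adj) (adj_irr : irreflexive adj).

Lemma independentP (S : {set T}) :
  reflect {in S &, forall x y, ~~ adj x y} (independent adj S).
Proof.
apply: (iffP forallP) => [indS x y xS yS | indS x].
  by move: (indS x); rewrite xS => /forallP/(_ y); rewrite yS.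
by apply/implyP => xS; apply/forall_inP => y yS; apply: indS.
Qed.

Variables (u v : T).
Hypothesis adj_uv : adj u v.
Hypothesis dominated : forall w, adj v w -> w != u -> adj u w.

Definition swap (S : {set T}) : {set T} := v |: (S :\ u).

Lemma indep_notin (S : {set T}) :
  independent adj S -> u \in S -> v \notin S.
Proof.
by move=> /independentP indS uS; apply/negP => /(indS u v uS); rewrite adj_uv.
Qed.

(* The swap preserves independence: v only sees u and neighbours of u. *)
Lemma independent_swap (S : {set T}) :
  independent adj S -> u \in S -> independent adj (swap S).
Proof.
move=> /independentP indS uS.
have v_free w : w \in S :\ u -> ~~ adj v w.
  case/setD1P => wu wS; apply/negP => /dominated /(_ wu).
  by apply/negP; apply: indS.
apply/independentP => x y; rewrite !in_setU1.
case/predU1P => [-> | xS]; case/predU1P => [-> | yS].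
- by rewrite adj_irr.
- by apply: v_free.
- by rewrite adj_sym; apply: v_free.
- by move/setD1P: xS => [_ xS]; move/setD1P: yS => [_ yS]; apply: indS.
Qed.

Lemma swapK (S : {set T}) :
  u \in S -> v \notin S -> u |: (swap S :\ v) = S.
Proof.
move=> uS vS; apply/setP => x; rewrite !inE.
case: (eqVneq x u) => [-> | xu] //=.
by case: (eqVneq x v) => [-> | xv] //=; rewrite (negbTE vS).
Qed.

Lemma card_indep_rsets_swap (r : nat) :
  #|indep_rsets_at adj r u| <= #|indep_rsets_at adj r v|.
Proof.
have memA S : S \in indep_rsets_at adj r u ->
    [/\ independent adj S, #|S| = r, u \in S & v \notin S].
  rewrite inE => /and3P [indS /eqP cardS uS].
  by split => //; apply: indep_notin.
rewrite -(card_in_imset (f := swap)); last first.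
  move=> S1 S2 /memA [_ _ uS1 vS1] /memA [_ _ uS2 vS2] eq_swap.
  by rewrite -(swapK S1 uS1 vS1) -(swapK S2 uS2 vS2) eq_swap.
apply/subset_leq_card/subsetP => _ /imsetP [S /memA [indS cardS uS vS] ->].
rewrite inE independent_swap //= setU11 andbT.
by rewrite cardsU1 in_setD1 (negbTE vS) andbF /= -cardS (cardsD1 u S) uS.
Qed.

End DominatedSwap.

Lemma pendant_adj_sym (n : nat) (adjG : rel 'I_n) :
  symmetric adjG -> symmetric (pendant_adj adjG).
Proof. by move=> symG [i|i] [j|j] //=; rewrite eq_sym. Qed.

Lemma pendant_adj_irr (n : nat) (adjG : rel 'I_n) :
  irreflexive adjG -> irreflexive (pendant_adj adjG).
Proof. by move=> irrG [i|i] //=. Qed.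

Lemma pendant_leaf (n : nat) (adjG : rel 'I_n) (i : 'I_n) (w : pvert n) :
  pendant_adj adjG (inr i) w -> w = inl i.
Proof. by case: w => //= j /eqP ->. Qed.

Lemma path_adj_sym (n : nat) : symmetric (@path_adj n).
Proof. by move=> i j; rewrite /path_adj orbC. Qed.

Lemma path_adj_irr (n : nat) : irreflexive (@path_adj n).
Proof. by move=> i; rewrite /path_adj orbb eqn_leq ltnn. Qed.

(* Indices are 0-based: i : 'I_n stands for the paper's i+1 in {1..n}. *)
Theorem lemma5 (n : nat) (i : 'I_n) (r : nat) :
  1 <= r <= n ->
  #|indep_rsets_at (@path_pendant_adj n) r (inl i)|
    <= #|indep_rsets_at (@path_pendant_adj n) r (inr i)|.
Proof.
move=> _; apply: card_indep_rsets_swap.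
- exact/pendant_adj_sym/path_adj_sym.
- exact/pendant_adj_irr/path_adj_irr.
- by rewrite /= eqxx.
- by move=> w /pendant_leaf ->; rewrite eqxx.
Qed.
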